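(* Let $k\ge1$, let $G$ and $H$ be simple graphs on at most $n$ vertices, and let $f_k(n)=2k\cdot4^{n^{2k}}$. Then $\hom(F,G)=\hom(F,H)$ for every underlying graph $F$ of a member of $\mathcal P_k$ if and only if $\hom(F,G)=\hom(F,H)$ for every underlying graph $F$ of a member of $\mathcal P_k$ having at most $f_k(n)$ vertices.
   Context: $\hom(F,G)$ is the number of homomorphisms $F\to G$. A $(k,k)$-bilabelled graph is $\boldsymbol F=(F,\boldsymbol u,\boldsymbol v)$, $\boldsymbol u,\boldsymbol v\in V(F)^k$, with underlying graph $F$. Series composition $\boldsymbol F\cdot\boldsymbol F'$: disjoint union with $v_i$ identified with $u'_i$, multiple edges removed, labels $(\boldsymbol u,\boldsymbol v')$. Parallel composition $\boldsymbol F\odot\boldsymbol F'$: identify $u_i$ with $u'_i$, $v_i$ with $v'_i$, multiple edges removed. For $\sigma\in\mathfrak S_{2k}$, $\boldsymbol F^\sigma$ has in-labels $(w_{\sigma(1)},\dots,w_{\sigma(k)})$, out-labels $(w_{\sigma(k+1)},\dots,w_{\sigma(2k)})$, $\boldsymbol w=\boldsymbol u\boldsymbol v$. $\mathscr C_k$ = cyclic group of rotations of $(1,\dots,k,2k,\dots,k+1)$. Bilabelled minors: via edge contraction, edge deletion, deletion of unlabelled vertices. $\boldsymbol C_k$: vertices $[2k]$, in-labels $(1,\dots,k)$, out-labels $(k+1,\dots,2k)$, edges $\{i,i+1\}$ ($i\in[2k]\setminus\{k,2k\}$), $\{1,k+1\},\{k,2k\}$; $\boldsymbol M_k$: same vertices/labels,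 edges $\{i,i+k\}$. $\mathcal Q_k^P,\mathcal Q_k^S$ = bilabelled minors of $\boldsymbol C_k,\boldsymbol M_k$; $\mathcal Q_k$ their union. $\mathcal P_k$ = smallest class containing $\mathcal Q_k$, closed under series composition, $\boldsymbol F\mapsto\boldsymbol F\odot\boldsymbol Q$ ($\boldsymbol Q\in\mathcal Q_k^P$), and $\boldsymbol F\mapsto\boldsymbol F^\sigma$ ($\sigma\in\mathscr C_k$). *)

From mathcomp Require Import all_boot.
Set Implicit Arguments.
Unset Strict Implicit.
Unset Printing Implicit Defensive.

Definition symr (T : finType) (r : rel T) : rel T := fun x y => r x y || r y x.

Lemma symr_sym (T : finType) (r : rel T) : symmetric (symr r).
Proof. by move=> x y; rewrite /symr orbC. Qed.

(* vertices of the quotient: canonical representatives of the classes *)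
Definition qT (T : finType) (r : rel T) : finType :=
  {x : T | root (symr r) x == x}.

Definition qproj (T : finType) (r : rel T) (x : T) : qT r :=
  exist _ (root (symr r) x)
    (@roots_root _ (symr r) (sym_connect_sym (@symr_sym T r)) x).

Definition imrel (T U : finType) (p : T -> U) (e : rel T) : rel U :=
  fun a b => [exists x, exists y, [&& e x y, p x == a & p y == b]].

Definition hom (V : finType) (E : rel V) (W : finType) (EW : rel W) : nat :=
  #|[pred f : {ffun V -> W} | [forall x, forall y, E x y ==> EW (f x) (f y)]]|.

(* A (k,k)-bilabelled graph: underlying graph (bV, bE), in-labels bin,
   out-labels bout (labels need not be distinct). *)
Record bgraph (k : nat) := BG {
  bV : finType;
  bE : rel bV;
  bin : 'I_k -> bV;
  bout : 'I_k -> bV }.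
Arguments bV {k} b.
Arguments bE {k} b.
Arguments bin {k} b.
Arguments bout {k} b.

Section Ops.
Variable k : nat.

Definition ser_rel (F F' : bgraph k) : rel (bV F + bV F') :=
  fun a b => [exists i, (a == inl (bout F i)) && (b == inr (bin F' i))].
Arguments ser_rel F F' : clear implicits.

Definition sum_rel (F F' : bgraph k) : rel (bV F + bV F') :=
  fun a b => match a, b with
             | inl x, inl y => bE F x y
             | inr x, inr y => bE F' x y
             | _, _ => false end.
Arguments sum_rel F F' : clear implicits.

Definition ser (F F' : bgraph k) : bgraph k :=
  @BG k (qT (ser_rel F F'))
     (imrel (@qproj _ (ser_rel F F')) (sum_rel F F'))
     (fun i => qproj (ser_rel F F') (inl (bin F i)))
     (fun i => qproj (ser_rel F F') (inr (bout F' i))).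

Definition par_rel (F F' : bgraph k) : rel (bV F + bV F') :=
  fun a b => [exists i, ((a == inl (bin F i)) && (b == inr (bin F' i)))
                     || ((a == inl (bout F i)) && (b == inr (bout F' i)))].
Arguments par_rel F F' : clear implicits.

Definition par (F F' : bgraph k) : bgraph k :=
  @BG k (qT (par_rel F F'))
     (imrel (@qproj _ (par_rel F F')) (sum_rel F F'))
     (fun i => qproj (par_rel F F') (inl (bin F i)))
     (fun i => qproj (par_rel F F') (inl (bout F i))).

(* Positions (0-indexed)
   0..2k-1 of w = u v; the cyclic sequence (1,..,k,2k,..,k+1) becomes
   c_j = flip j, where flip j = j for j < k and 3k-1-j otherwise
   (flip is an involution on [0,2k)).  The rotation by r is
   rho_r(i) = c_((flip i + r) mod 2k), and C_k = {rho_r | r : nat}. *)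
Definition flip (m : nat) : nat := if m < k then m else (3 * k).-1 - m.

Definition rotk (r : nat) (j : 'I_(k + k)) : 'I_(k + k) :=
  insubd j (flip ((flip j + r) %% (k + k))).

Definition wlab (F : bgraph k) (j : 'I_(k + k)) : bV F :=
  match split j with inl i => bin F i | inr i => bout F i end.

Definition rot (r : nat) (F : bgraph k) : bgraph k :=
  @BG k (bV F) (bE F)
     (fun i => wlab F (rotk r (lshift k i)))
     (fun i => wlab F (rotk r (rshift k i))).

Definition contr_rel (F : bgraph k) (x y : bV F) : rel (bV F) :=
  fun a b => (a == x) && (b == y).
Arguments contr_rel F x y : clear implicits.

(* contraction of the edge xy (the resulting loop is removed) *)
Definition contract (F : bgraph k) (x y : bV F) : bgraph k :=
  @BG k (qT (contr_rel F x y))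
     (fun a b => (a != b) && imrel (@qproj _ (contr_rel F x y)) (bE F) a b)
     (fun i => qproj (contr_rel F x y) (bin F i))
     (fun i => qproj (contr_rel F x y) (bout F i)).

Definition deledge (F : bgraph k) (x y : bV F) : bgraph k :=
  @BG k (bV F)
     (fun a b => bE F a b && ~~ (((a == x) && (b == y)) || ((a == y) && (b == x))))
     (bin F) (bout F).

Definition delV (F : bgraph k) (x : bV F) : finType := {z : bV F | z != x}.

Definition delvertex (F : bgraph k) (x : bV F)
    (Hi : forall i, bin F i != x) (Ho : forall i, bout F i != x) : bgraph k :=
  @BG k (delV x)
     (fun a b => bE F (val a) (val b))
     (fun i => exist _ (bin F i) (Hi i))
     (fun i => exist _ (bout F i) (Ho i)).

Inductive bminor (F0 : bgraph k) : bgraph k -> Prop :=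
| bm_refl : bminor F0 F0
| bm_contract F x y : bminor F0 F -> bE F x y -> x != y -> bminor F0 (contract x y)
| bm_deledge F x y : bminor F0 F -> bE F x y -> bminor F0 (deledge x y)
| bm_delvertex F x Hi Ho : bminor F0 F -> bminor F0 (@delvertex F x Hi Ho).

End Ops.

(* the bilabelled graphs C_k and M_k on vertices 0..2k-1 (0-indexed),
   in-labels 0..k-1, out-labels k..2k-1 *)
Definition Ck_adj0 (k : nat) (a b : nat) : bool :=
  [|| (b == a.+1) && (a != k.-1) && (b < k + k),
      (a == 0) && (b == k) |
      (a == k.-1) && (b == (k + k).-1)].

Definition Ck (k : nat) : bgraph k :=
  @BG k ('I_(k + k) : finType)
     (fun a b => Ck_adj0 k a b || Ck_adj0 k b a)
     (fun i => lshift k i) (fun i => rshift k i).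

Definition Mk (k : nat) : bgraph k :=
  @BG k ('I_(k + k) : finType)
     (fun a b => (val b == val a + k) || (val a == val b + k))
     (fun i => lshift k i) (fun i => rshift k i).

Definition inQP (k : nat) (F : bgraph k) : Prop := bminor (Ck k) F.
Definition inQS (k : nat) (F : bgraph k) : Prop := bminor (Mk k) F.
Definition inQ (k : nat) (F : bgraph k) : Prop := inQP F \/ inQS F.

Inductive inP (k : nat) : bgraph k -> Prop :=
| P_Q F : inQ F -> inP F
| P_ser F F' : inP F -> inP F' -> inP (ser F F')
| P_par F Q : inP F -> inQP Q -> inP (par F Q)
| P_rot F r : inP F -> inP (rot r F).

Definition fk (k n : nat) : nat := 2 * k * 4 ^ (n ^ (2 * k)).

(* For a bilabelled graph F, record the number of
   homomorphisms F -> G and F -> H for each prescribed image of the 2k labels; this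
   vector has at most 2 n^(2k) entries and determines hom(F,G) - hom(F,H) linearly.
   Series composition acts bilinearly on these vectors, parallel composition with a
   fixed graph and relabelling act linearly.  Let S_d be the span of the vectors of
   the members of P_k built with nesting depth at most d.  This increasing chain of
   subspaces stops growing at some d <= 2 n^(2k), and by (bi)linearity S_d then
   contains the vectors of all of P_k.  Members of depth d have at most
   2k 2^d <= f_k(n) vertices, so if G and H agree on the small members, the linear
   functional vanishes on S_d, hence on every member of P_k. *)

From mathcomp Require Import all_boot all_algebra.
From Stdlib Require Import Classical.

Set Implicit Arguments.
Unset Strict Implicit.
Unset Printing Implicit Defensive.

Import GRing.Theory.

Section Spanned.
Variables (K : fieldType) (vT : vectType K).
Local Open Scope ring_scope.

Lemma span_ind (P : vT -> Prop) (s : seq vT) :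
  P 0 -> (forall a u v, P u -> P v -> P (a *: u + v)) -> {in s, forall u, P u} ->
  forall v, v \in <<s>>%VS -> P v.
Proof.
move=> P0 PZD; elim: s => [|u s IHs] Ps v.
  by rewrite span_nil memv0 => /eqP ->.
rewrite span_cons => /memv_addP [_ /vlineP [a ->] [y ys ->]].
apply: PZD; first exact/Ps/mem_head.
by apply: IHs ys => x xs; apply/Ps; rewrite in_cons xs orbT.
Qed.

Definition spanned (P : vT -> Prop) (v : vT) : Prop :=
  exists2 s : seq vT, {in s, forall u, P u} & v \in <<s>>%VS.

Lemma spanned_gen (P : vT -> Prop) v : P v -> spanned P v.
Proof. by exists [:: v]; [move=> u; rewrite inE => /eqP -> | exact: memv_span1]. Qed.

Lemma spanned0 (P : vT -> Prop) : spanned P 0.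
Proof. by exists [::]; rewrite ?mem0v. Qed.

Lemma spannedZD (P : vT -> Prop) a u v : spanned P u -> spanned P v -> spanned P (a *: u + v).
Proof.
move=> [s Ps us] [t Pt vt]; exists (s ++ t).
  by move=> x; rewrite mem_cat => /orP []; [exact: Ps | exact: Pt].
by rewrite span_cat memv_add ?memvZ.
Qed.

Lemma scalar_spanned_eq0 (P : vT -> Prop) (phi : vT -> K) :
  scalar phi -> (forall u, P u -> phi u = 0) -> forall v, spanned P v -> phi v = 0.
Proof.
move=> phi_lin phiP v [s Ps].
apply: (span_ind (P := fun x => phi x = 0)) => [|a x y phix phiy|u /Ps]; last exact: phiP.
  by have := phi_lin (-1) 0 0; rewrite scaler0 addr0 mulN1r addNr.
by rewrite phi_lin phix phiy mulr0 addr0.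
Qed.

Lemma spanned_lin (P Q : vT -> Prop) (f : vT -> vT) :
  linear f -> (forall u, P u -> spanned Q (f u)) -> forall v, spanned P v -> spanned Q (f v).
Proof.
move=> f_lin fPQ v [s Ps].
apply: (span_ind (P := fun x => spanned Q (f x))) => [|a x y fx fy|u /Ps]; last exact: fPQ.
  by have := f_lin (-1) 0 0; rewrite scaler0 addr0 scaleN1r addNr => ->; apply: spanned0.
by rewrite f_lin; apply: spannedZD.
Qed.

Lemma spanned_bilin (P Q : vT -> Prop) (B : vT -> vT -> vT) :
  (forall y, linear (B^~ y)) -> (forall x, linear (B x)) ->
  (forall u v, P u -> P v -> spanned Q (B u v)) ->
  forall x y, spanned P x -> spanned P y -> spanned Q (B x y).
Proof.
move=> Bl Br BPQ x y Px Py; apply: spanned_lin (Bl y) _ _ Px => u Pu.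
by apply: spanned_lin (Br u) _ _ Py => v Pv; apply: BPQ.
Qed.

Lemma spanned_chain_stable (P : nat -> vT -> Prop) :
  (forall d v, P d v -> P d.+1 v) ->
  exists2 d, (d <= \dim {:vT})%N & forall v, P d.+1 v -> spanned (P d) v.
Proof.
move=> Pmono.
pose stable d := forall v, P d.+1 v -> spanned (P d) v.
(* Unstable levels keep extending a free family, which cannot outgrow the dimension. *)
have grow d : (d <= (\dim {:vT}).+1)%N ->
    (exists2 d', (d' <= \dim {:vT})%N & stable d') \/
    exists s : seq vT, [/\ {in s, forall u, P d u}, free s & size s = d].
  elim: d => [|d IHd] d_le; first by right; exists [::]; rewrite nil_free.
  case: (IHd (ltnW d_le)) => [stable_lt | [s [Ps free_s size_s]]]; first by left.
  case: (classic (stable d)) => [stable_d | /not_all_ex_not [v]]; first by left; exists d.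
  move=> /(imply_to_and (P d.+1 v)) [Pv not_spanned].
  have v_notin : v \notin <<s>>%VS by apply/negP => vs; apply: not_spanned; exists s.
  right; exists (v :: s); split; rewrite ?free_cons ?v_notin /= ?size_s //.
  by move=> u; rewrite inE => /orP [/eqP -> // | /Ps /Pmono].
have [// | [s [_ /eqP free_s size_s]]] := grow _ (leqnn _).
by have := dimvS (subvf <<s>>); rewrite free_s size_s dimvf ltnn.
Qed.

End Spanned.

Lemma sum_partition (A B : finType) (P : pred A) (a : A -> B) (h : B -> nat) :
  \sum_(x | P x) h (a x) = \sum_b h b * \sum_x (P x && (a x == b)).
Proof.
rewrite (partition_big a predT) //=; apply: eq_bigr => b _.
rewrite big_mkcond big_distrr /=; apply: eq_bigr => x _.
by case: (P x); case: eqP => [->|]; rewrite ?muln1 ?muln0.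
Qed.

Lemma sum2_partition (A1 A2 B1 B2 : finType) (P1 : pred A1) (P2 : pred A2)
    (a1 : A1 -> B1) (a2 : A2 -> B2) (h : B1 -> B2 -> nat) :
  \sum_(x | P1 x) \sum_(y | P2 y) h (a1 x) (a2 y) =
  \sum_b1 \sum_b2 h b1 b2 * (\sum_x (P1 x && (a1 x == b1))) * (\sum_y (P2 y && (a2 y == b2))).
Proof.
under eq_bigr => x _ do rewrite (sum_partition P2 a2 (h (a1 x))).
rewrite (sum_partition P1 a1 (fun b1 => \sum_b2 h b1 b2 * _)).
apply: eq_bigr => b1 _; rewrite big_distrl; apply: eq_bigr => b2 _ /=.
by rewrite mulnAC.
Qed.

Section HomCount.
Variables (W : finType) (EW : rel W).

Definition is_hom (V : finType) (E : rel V) (f : {ffun V -> W}) : bool :=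
  [forall x, forall y, E x y ==> EW (f x) (f y)].

Lemma hom_sum (V : finType) (E : rel V) : hom E EW = \sum_(f : {ffun V -> W}) is_hom E f.
Proof.
rewrite /hom -sum1_card big_mkcond /=; apply: eq_bigr => f _.
by rewrite unfold_in /is_hom; case: ifP.
Qed.

Section Quotient.
Variables (T : finType) (r : rel T).

Definition compatible (g : {ffun T -> W}) : bool :=
  [forall x, forall y, r x y ==> (g x == g y)].

Definition qlift (f : {ffun qT r -> W}) : {ffun T -> W} := [ffun x => f (qproj r x)].

Lemma qproj_val (q : qT r) : qproj r (val q) = q.
Proof. by apply: val_inj; case: q => x /= /eqP. Qed.

Lemma qproj_rel x y : r x y -> qproj r x = qproj r y.
Proof.
move=> rxy; apply: val_inj => /=.
apply/(fingraph.rootP (sym_connect_sym (@symr_sym T r))).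
by apply: connect1; rewrite /symr rxy.
Qed.

Lemma compatible_root g : compatible g -> forall x, g (fingraph.root (symr r) x) = g x.
Proof.
move=> g_compat x.
have closed_g : closed (symr r) [pred z | g z == g x].
  move=> u v /orP [] ruv; rewrite !inE;
    have /eqP -> := implyP (forallP (forallP g_compat _) _) ruv => //.
have := closed_connect closed_g (connect_root (symr r) x).
by rewrite !inE eqxx => /esym /eqP.
Qed.

Lemma sum_qlift (h : {ffun T -> W} -> nat) :
  \sum_(f : {ffun qT r -> W}) h (qlift f) = \sum_(g | compatible g) h g.
Proof.
symmetry; rewrite (reindex_onto qlift (fun g => [ffun q => g (val q)])) /=.
  apply: eq_bigl => f; apply/andP; split.
    apply/forallP => x; apply/forallP => y; apply/implyP => rxy.
    by rewrite !ffunE (qproj_rel rxy).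
  by apply/eqP/ffunP => q; rewrite !ffunE qproj_val.
by move=> g g_compat; apply/ffunP => x; rewrite !ffunE compatible_root.
Qed.

Lemma is_hom_quotient (E : rel T) (f : {ffun qT r -> W}) :
  is_hom (imrel (qproj r) E) f = is_hom E (qlift f).
Proof.
apply/forallP/forallP => f_hom x.
  apply/forallP => y; apply/implyP => Exy; rewrite !ffunE.
  apply: (implyP (forallP (f_hom _) _)).
  by apply/existsP; exists x; apply/existsP; exists y; rewrite Exy !eqxx.
apply/forallP => y; apply/implyP.
move=> /existsP [x' /existsP [y' /and3P [Exy' /eqP <- /eqP <-]]].
by have := implyP (forallP (f_hom x') y') Exy'; rewrite !ffunE.
Qed.

End Quotient.

Section DisjointSum.
Variables (A B : finType).

Definition join_ffun (g1 : {ffun A -> W}) (g2 : {ffun B -> W}) : {ffun A + B -> W} :=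
  [ffun s => match s with inl a => g1 a | inr b => g2 b end].

Lemma sum_join_ffun (h : {ffun A + B -> W} -> nat) :
  \sum_g h g = \sum_g1 \sum_g2 h (join_ffun g1 g2).
Proof.
rewrite pair_bigA /= (reindex (fun p => join_ffun p.1 p.2)) //=.
exists (fun g => ([ffun a => g (inl a)], [ffun b => g (inr b)])) => [[g1 g2] _ | g _] /=.
  by congr pair; apply/ffunP => ?; rewrite !ffunE.
by apply/ffunP => -[a|b]; rewrite !ffunE.
Qed.

End DisjointSum.

End HomCount.

Section LabelledCount.
Variables (k : nat) (W : finType) (EW : rel W).
Local Notation labelling := {ffun 'I_(k + k) -> W}.

Lemma wlab_lshift (F : bgraph k) i : wlab F (lshift k i) = bin F i.
Proof. by rewrite /wlab (unsplitK (inl i : 'I_k + 'I_k)). Qed.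

Lemma wlab_rshift (F : bgraph k) i : wlab F (rshift k i) = bout F i.
Proof. by rewrite /wlab (unsplitK (inr i : 'I_k + 'I_k)). Qed.

Definition lab (F : bgraph k) (f : {ffun bV F -> W}) : labelling := [ffun j => f (wlab F j)].

Definition hom_lab (F : bgraph k) (w : labelling) : nat :=
  \sum_(f : {ffun bV F -> W}) (is_hom EW (bE F) f && (lab f == w)).

Lemma is_hom_sum_rel (F1 F2 : bgraph k) g1 g2 :
  is_hom EW (@sum_rel k F1 F2) (join_ffun g1 g2) =
  is_hom EW (bE F1) g1 && is_hom EW (bE F2) g2.
Proof.
apply/forallP/andP => [g_hom | [/forallP g1_hom /forallP g2_hom]].
  split; apply/forallP => x; apply/forallP => y; apply/implyP => Exy.
    by have := forallP (g_hom (inl x)) (inl y); rewrite /= Exy !ffunE.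
  by have := forallP (g_hom (inr x)) (inr y); rewrite /= Exy !ffunE.
case=> x; apply/forallP => -[y|y] //=; rewrite !ffunE.
  exact: (forallP (g1_hom x) y).
exact: (forallP (g2_hom x) y).
Qed.

Lemma hom_sum_lab (F : bgraph k) : hom (bE F) EW = \sum_w hom_lab F w.
Proof.
transitivity (\sum_(f | is_hom EW (bE F) f) (fun _ => 1) (lab f)).
  by rewrite hom_sum [RHS]big_mkcond; apply: eq_bigr => f _; case: is_hom.
by rewrite (sum_partition _ (@lab F) (fun _ => 1)); apply: eq_bigr => w _; rewrite mul1n.
Qed.

(* [ser] and [par] are quotients by [r] of the disjoint union of their arguments, with
   labels [sj]; [c] is the gluing condition, read off the two boundary labellings. *)
Lemma hom_lab_quotient (F1 F2 : bgraph k) (r : rel (bV F1 + bV F2))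
    (sj : 'I_(k + k) -> bV F1 + bV F2) (c : labelling -> labelling -> bool) (w : labelling) :
  (forall g1 g2, compatible r (join_ffun g1 g2) && ([ffun j => join_ffun g1 g2 (sj j)] == w) =
                 c (lab g1) (lab g2)) ->
  \sum_(f : {ffun qT r -> W})
     (is_hom EW (imrel (qproj r) (@sum_rel k F1 F2)) f && ([ffun j => f (qproj r (sj j))] == w))
  = \sum_w1 \sum_w2 c w1 w2 * hom_lab F1 w1 * hom_lab F2 w2.
Proof.
move=> cE.
pose h g := (is_hom EW (@sum_rel k F1 F2) g && ([ffun j => g (sj j)] == w)) : nat.
transitivity (\sum_(f : {ffun qT r -> W}) h (qlift f)).
  apply: eq_bigr => f _; rewrite /h is_hom_quotient.
  by congr (nat_of_bool (_ && (_ == w))); apply/ffunP => j; rewrite !ffunE.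
rewrite sum_qlift big_mkcond sum_join_ffun /= -sum2_partition.
transitivity (\sum_g1 \sum_g2
    (is_hom EW (bE F1) g1 && (is_hom EW (bE F2) g2 && c (lab g1) (lab g2)) : nat)).
  apply: eq_bigr => g1 _; apply: eq_bigr => g2 _; rewrite /h is_hom_sum_rel -cE.
  by case: (compatible _ _); case: (is_hom _ _ g1); case: (is_hom _ _ g2).
rewrite [RHS]big_mkcond; apply: eq_bigr => g1 _; case: (is_hom _ _ g1); last by rewrite big1.
by rewrite [RHS]big_mkcond; apply: eq_bigr => g2 _; case: (is_hom _ _ g2).
Qed.

Definition condser (w w1 w2 : labelling) : bool :=
  [forall i : 'I_k, [&& w1 (rshift k i) == w2 (lshift k i),
                        w1 (lshift k i) == w (lshift k i) &
                        w2 (rshift k i) == w (rshift k i)]].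

Lemma hom_lab_ser (F1 F2 : bgraph k) w :
  hom_lab (ser F1 F2) w = \sum_w1 \sum_w2 condser w w1 w2 * hom_lab F1 w1 * hom_lab F2 w2.
Proof.
pose sj j : bV F1 + bV F2 :=
  match split j with inl i => inl (bin F1 i) | inr i => inr (bout F2 i) end.
rewrite -(@hom_lab_quotient F1 F2 (@ser_rel k F1 F2) sj _ w).
  apply: eq_bigr => f _; congr (nat_of_bool (_ && (_ == w))).
  by apply/ffunP => j; rewrite !ffunE /wlab /sj /=; case: (split j).
have sjE i : (sj (lshift k i) = inl (bin F1 i)) * (sj (rshift k i) = inr (bout F2 i)).
  by rewrite /sj (unsplitK (inl i : 'I_k + 'I_k)) (unsplitK (inr i : 'I_k + 'I_k)).
move=> g1 g2; apply/andP/forallP => [[/forallP g_compat /eqP <-] i | cond].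
  have rel_i : @ser_rel k F1 F2 (inl (bout F1 i)) (inr (bin F2 i)).
    by apply/existsP; exists i; rewrite !eqxx.
  have := implyP (forallP (g_compat _) _) rel_i.
  by rewrite !ffunE !wlab_lshift !wlab_rshift !sjE /= => ->; rewrite !eqxx.
split.
  apply/forallP => x; apply/forallP => y; apply/implyP => /existsP [i /andP [/eqP -> /eqP ->]].
  have /and3P [/eqP e _ _] := cond i.
  by rewrite !ffunE !wlab_lshift !wlab_rshift in e; rewrite !ffunE e.
apply/eqP/ffunP => j; rewrite -(splitK j); case: (split j) => i /=; rewrite ffunE.
  have /and3P [_ /eqP <- _] := cond i.
  by rewrite sjE !ffunE wlab_lshift.
have /and3P [_ _ /eqP <-] := cond i.
by rewrite sjE !ffunE wlab_rshift.
Qed.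

Lemma hom_lab_par (F1 F2 : bgraph k) w : hom_lab (par F1 F2) w = hom_lab F1 w * hom_lab F2 w.
Proof.
pose sj j : bV F1 + bV F2 := inl (wlab F1 j).
have -> : hom_lab (par F1 F2) w =
    \sum_w1 \sum_w2 ((w1 == w) && (w2 == w)) * hom_lab F1 w1 * hom_lab F2 w2.
  rewrite -(@hom_lab_quotient F1 F2 (@par_rel k F1 F2) sj _ w).
    apply: eq_bigr => f _; congr (nat_of_bool (_ && (_ == w))).
    by apply/ffunP => j; rewrite !ffunE /sj /wlab /=; case: (split j).
  move=> g1 g2; have -> : [ffun j => join_ffun g1 g2 (sj j)] = lab g1.
    by apply/ffunP => j; rewrite !ffunE.
  case: (lab g1 =P w) => [<- | _]; rewrite ?andbF // andbT /=.
  apply/forallP/eqP => [g_compat | lab_eq x].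
    apply/ffunP => j; rewrite -(splitK j) !ffunE; case: (split j) => i /=.
      have rel_i : @par_rel k F1 F2 (inl (bin F1 i)) (inr (bin F2 i)).
        by apply/existsP; exists i; rewrite !eqxx.
      have := implyP (forallP (g_compat _) _) rel_i.
      by rewrite !ffunE !wlab_lshift => /eqP.
    have rel_i : @par_rel k F1 F2 (inl (bout F1 i)) (inr (bout F2 i)).
      by apply/existsP; exists i; rewrite !eqxx orbT.
    have := implyP (forallP (g_compat _) _) rel_i.
    by rewrite !ffunE !wlab_rshift => /eqP.
  apply/forallP => y; apply/implyP => /existsP [i /orP [] /andP [/eqP -> /eqP ->]].
    have := congr1 (fun u : labelling => u (lshift k i)) lab_eq.
    by rewrite !ffunE !wlab_lshift => ->.
  have := congr1 (fun u : labelling => u (rshift k i)) lab_eq.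
  by rewrite !ffunE !wlab_rshift => ->.
rewrite (bigD1 w) //= [X in _ + X]big1 ?addn0 => [|w1 /negPf w1w]; last first.
  by rewrite big1 // => w2 _; rewrite w1w.
rewrite (bigD1 w) //= [X in _ + X]big1 ?addn0 => [|w2 /negPf w2w]; last first.
  by rewrite w2w andbF.
by rewrite eqxx mul1n.
Qed.

Lemma wlab_rot (F : bgraph k) r j : wlab (rot r F) j = wlab F (rotk r j).
Proof. by rewrite /wlab -{2}(splitK j); case: (split j). Qed.

Definition rot_coef r (w w1 : labelling) : bool := [ffun j => w1 (rotk r j)] == w.

Lemma hom_lab_rot (F : bgraph k) r w :
  hom_lab (rot r F) w = \sum_w1 rot_coef r w w1 * hom_lab F w1.
Proof.
transitivity (\sum_(f | is_hom EW (bE F) f) (rot_coef r w (lab f) : nat)).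
  rewrite [RHS]big_mkcond; apply: eq_bigr => f _.
  have -> : lab (F := rot r F) f = [ffun j => @lab F f (rotk r j)].
    by apply/ffunP => j; rewrite !ffunE wlab_rot.
  by case: is_hom.
exact: (sum_partition _ (@lab F) (fun w1 => rot_coef r w w1 : nat)).
Qed.

End LabelledCount.

Section Depth.
Variable k : nat.

Lemma card_qT (T : finType) (r : rel T) : #|qT r| <= #|T|.
Proof. by rewrite card_sig max_card. Qed.

Lemma card_ser (F1 F2 : bgraph k) : #|bV (ser F1 F2)| <= #|bV F1| + #|bV F2|.
Proof. by rewrite -card_sum card_qT. Qed.

Lemma card_par (F1 F2 : bgraph k) : #|bV (par F1 F2)| <= #|bV F1| + #|bV F2|.
Proof. by rewrite -card_sum card_qT. Qed.

Lemma card_bminor (F0 F : bgraph k) : bminor F0 F -> #|bV F| <= #|bV F0|.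
Proof.
elim=> //= [F1 x y _ le_F1 _ _ | F1 x Hi Ho _ le_F1]; apply: leq_trans le_F1.
  exact: card_qT.
by rewrite card_sig max_card.
Qed.

Lemma card_inQ (F : bgraph k) : inQ F -> #|bV F| <= k + k.
Proof. by case=> /card_bminor; rewrite card_ord. Qed.

(* Allowing [Pd_Q] at every depth makes the depth monotone ([inP_depthS]). *)
Inductive inP_depth : nat -> bgraph k -> Prop :=
| Pd_Q d F : inQ F -> inP_depth d F
| Pd_ser d F F' : inP_depth d F -> inP_depth d F' -> inP_depth d.+1 (ser F F')
| Pd_par d F Q : inP_depth d F -> inQP Q -> inP_depth d.+1 (par F Q)
| Pd_rot d F r : inP_depth d F -> inP_depth d.+1 (rot r F).

Lemma inP_depthS d F : inP_depth d F -> inP_depth d.+1 F.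
Proof. by elim=> *; constructor. Qed.

Lemma inP_depth_inP d F : inP_depth d F -> inP F.
Proof. by elim=> *; [apply: P_Q | apply: P_ser | apply: P_par | apply: P_rot]. Qed.

Lemma card_inP_depth d F : inP_depth d F -> #|bV F| <= (k + k) * 2 ^ d.
Proof.
have base m : k + k <= (k + k) * 2 ^ m by rewrite leq_pmulr ?expn_gt0.
have double m : (k + k) * 2 ^ m.+1 = (k + k) * 2 ^ m + (k + k) * 2 ^ m.
  by rewrite expnS mulnCA mul2n -addnn.
elim=> [m F0 QF0 | m F1 F2 _ le_F1 _ le_F2 | m F1 Q _ le_F1 QPQ | m F1 r _ le_F1].
- exact: leq_trans (card_inQ QF0) (base m).
- by rewrite double (leq_trans (card_ser F1 F2)) ?leq_add.
- have le_Q := card_inQ (or_introl QPQ).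
  by rewrite double (leq_trans (card_par F1 Q)) // leq_add // (leq_trans le_Q).
- by rewrite double (leq_trans le_F1) ?leq_addr.
Qed.

End Depth.

Section CountVector.
Variables (k : nat) (W : finType) (EW : rel W).
Local Notation labelling := {ffun 'I_(k + k) -> W}.
Local Notation labspace := {ffun labelling -> rat^o}.
Local Open Scope ring_scope.

Definition homvec (F : bgraph k) : labspace := [ffun w => (hom_lab EW F w)%:R].

Definition bilin (c : labelling -> labelling -> labelling -> bool) (x y : labspace) :
    labspace :=
  [ffun w => \sum_w1 \sum_w2 (c w w1 w2)%:R * x w1 * y w2].

Definition unlin (c : labelling -> labelling -> bool) (x : labspace) : labspace :=
  [ffun w => \sum_w1 (c w w1)%:R * x w1].

Definition pmul (x y : labspace) : labspace := [ffun w => x w * y w].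

Lemma bilin_linl c y : linear (bilin c ^~ y).
Proof.
move=> a u v; apply/ffunP => w; rewrite !ffunE scaler_sumr -big_split.
apply: eq_bigr => w1 _; rewrite scaler_sumr -big_split; apply: eq_bigr => w2 _.
by rewrite ffunE ffunE /= mulrDr mulrDl -scalerAr -scalerAl.
Qed.

Lemma bilin_linr c x : linear (bilin c x).
Proof.
move=> a u v; apply/ffunP => w; rewrite !ffunE scaler_sumr -big_split.
apply: eq_bigr => w1 _; rewrite scaler_sumr -big_split; apply: eq_bigr => w2 _.
by rewrite !ffunE mulrDr -!scalerAr.
Qed.

Lemma unlin_lin c : linear (unlin c).
Proof.
move=> a u v; apply/ffunP => w; rewrite !ffunE scaler_sumr -big_split.
by apply: eq_bigr => w1 _; rewrite !ffunE mulrDr -!scalerAr.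
Qed.

Lemma pmul_linl y : linear (pmul ^~ y).
Proof. by move=> a u v; apply/ffunP => w; rewrite !ffunE mulrDl scalerAl. Qed.

Lemma homvec_ser F1 F2 :
  homvec (ser F1 F2) = bilin (@condser k W) (homvec F1) (homvec F2).
Proof.
apply/ffunP => w; rewrite !ffunE hom_lab_ser natr_sum; apply: eq_bigr => w1 _.
by rewrite natr_sum; apply: eq_bigr => w2 _; rewrite !ffunE !natrM.
Qed.

Lemma homvec_par F1 F2 : homvec (par F1 F2) = pmul (homvec F1) (homvec F2).
Proof. by apply/ffunP => w; rewrite !ffunE hom_lab_par natrM. Qed.

Lemma homvec_rot r F : homvec (rot r F) = unlin (rot_coef r) (homvec F).
Proof.
apply/ffunP => w; rewrite !ffunE hom_lab_rot natr_sum.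
by apply: eq_bigr => w1 _; rewrite !ffunE natrM.
Qed.

Lemma sum_homvec F : \sum_w homvec F w = (hom (bE F) EW)%:R.
Proof. by rewrite hom_sum_lab natr_sum; apply: eq_bigr => w _; rewrite ffunE. Qed.

End CountVector.

Section PairVector.
Variables (k : nat) (VG VH : finType) (EG : rel VG) (EH : rel VH).
Local Notation vT := ({ffun {ffun 'I_(k + k) -> VG} -> rat^o} *
                      {ffun {ffun 'I_(k + k) -> VH} -> rat^o})%type.
Local Open Scope ring_scope.

Definition homvec2 (F : bgraph k) : vT := (homvec EG F, homvec EH F).

Definition vser (x y : vT) : vT :=
  (bilin (@condser k VG) x.1 y.1, bilin (@condser k VH) x.2 y.2).

Definition vpar (x y : vT) : vT := (pmul x.1 y.1, pmul x.2 y.2).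

Definition vrot r (x : vT) : vT := (unlin (rot_coef r) x.1, unlin (rot_coef r) x.2).

Lemma vser_linl y : linear (vser ^~ y).
Proof. by move=> a u v; congr pair; apply: bilin_linl. Qed.

Lemma vser_linr x : linear (vser x).
Proof. by move=> a u v; congr pair; apply: bilin_linr. Qed.

Lemma vpar_linl y : linear (vpar ^~ y).
Proof. by move=> a u v; congr pair; apply: pmul_linl. Qed.

Lemma vrot_lin r : linear (vrot r).
Proof. by move=> a u v; congr pair; apply: unlin_lin. Qed.

Lemma homvec2_ser F1 F2 : homvec2 (ser F1 F2) = vser (homvec2 F1) (homvec2 F2).
Proof. by rewrite /homvec2 !homvec_ser. Qed.

Lemma homvec2_par F1 F2 : homvec2 (par F1 F2) = vpar (homvec2 F1) (homvec2 F2).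
Proof. by rewrite /homvec2 !homvec_par. Qed.

Lemma homvec2_rot r F : homvec2 (rot r F) = vrot r (homvec2 F).
Proof. by rewrite /homvec2 !homvec_rot. Qed.

Definition hom_diff (x : vT) : rat := \sum_w x.1 w - \sum_w x.2 w.

Lemma hom_diff_scalar : scalar hom_diff.
Proof.
move=> a u v; rewrite /hom_diff /=.
under eq_bigr do rewrite ffunE ffunE.
under [X in _ - X]eq_bigr do rewrite ffunE ffunE.
by rewrite !big_split /= -!scaler_sumr opprD addrACA mulrBr.
Qed.

Lemma hom_diff_homvec2 F :
  hom_diff (homvec2 F) = (hom (bE F) EG)%:R - (hom (bE F) EH)%:R.
Proof. by rewrite /hom_diff /= !sum_homvec. Qed.

Definition homvec2_depth d (v : vT) : Prop := exists2 F, inP_depth d F & v = homvec2 F.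

Lemma homvec2_depthS d v : homvec2_depth d v -> homvec2_depth d.+1 v.
Proof. by case=> F /inP_depthS PF ->; exists F. Qed.

Lemma inP_homvec2_spanned d :
  (forall v, homvec2_depth d.+1 v -> spanned (homvec2_depth d) v) ->
  forall F, inP F -> spanned (homvec2_depth d) (homvec2 F).
Proof.
move=> stable F; elim=> [F0 QF0 | F1 F2 _ IH1 _ IH2 | F1 Q _ IH1 QPQ | F1 r _ IH1].
- by apply: spanned_gen; exists F0 => //; apply: Pd_Q.
- rewrite homvec2_ser; apply: spanned_bilin IH1 IH2 => [||_ _ [A PA ->] [B PB ->]].
  + exact: vser_linl.
  + exact: vser_linr.
  by apply: stable; exists (ser A B); [apply: Pd_ser | rewrite homvec2_ser].
- rewrite homvec2_par; apply: spanned_lin (vpar_linl _) _ _ IH1 => _ [A PA ->].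
  by apply: stable; exists (par A Q); [apply: Pd_par | rewrite homvec2_par].
- rewrite homvec2_rot; apply: spanned_lin (vrot_lin _) _ _ IH1 => _ [A PA ->].
  by apply: stable; exists (rot r A); [apply: Pd_rot | rewrite homvec2_rot].
Qed.

Lemma dim_homvec2 : \dim {:vT} = (#|VG| ^ (k + k) + #|VH| ^ (k + k))%N.
Proof. by rewrite dimvf /dim /= /dim /= !muln1 !card_ffun !card_ord. Qed.

End PairVector.

Lemma depth_le_fk (k n d : nat) (VG VH : finType) :
  #|VG| <= n -> #|VH| <= n -> d <= #|VG| ^ (k + k) + #|VH| ^ (k + k) ->
  (k + k) * 2 ^ d <= fk k n.
Proof.
move=> le_G le_H le_d.
have le_pow (V : finType) : #|V| <= n -> #|V| ^ (k + k) <= n ^ (k + k).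
  by case: (posnP (k + k)) => [-> // | k_gt0]; rewrite leq_exp2r.
rewrite /fk mul2n -addnn leq_mul2l -[4]/(2 ^ 2) -expnM leq_exp2l //.
by apply/orP; right; rewrite (leq_trans le_d) // mul2n -addnn leq_add ?le_pow.
Qed.

Theorem theorem5p5 (k n : nat) (VG VH : finType) (EG : rel VG) (EH : rel VH) :
  1 <= k ->
  symmetric EG -> irreflexive EG -> #|VG| <= n ->
  symmetric EH -> irreflexive EH -> #|VH| <= n ->
  (forall F : bgraph k, inP F -> hom (bE F) EG = hom (bE F) EH) <->
  (forall F : bgraph k, inP F -> #|bV F| <= fk k n ->
     hom (bE F) EG = hom (bE F) EH).
Proof.
move=> _ _ _ le_G _ _ le_H.
split=> [hom_eq F PF _ | hom_eq_small F PF]; first exact: hom_eq.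
have [d le_d stable] := spanned_chain_stable (@homvec2_depthS k VG VH EG EH).
apply/eqP; rewrite -(Num.Theory.eqr_nat rat) -subr_eq0 -hom_diff_homvec2; apply/eqP.
apply: (scalar_spanned_eq0 (@hom_diff_scalar k VG VH) _ (inP_homvec2_spanned stable PF)).
move=> _ [A PA ->]; rewrite hom_diff_homvec2 hom_eq_small ?subrr //.
  exact: inP_depth_inP PA.
apply: leq_trans (card_inP_depth PA) (depth_le_fk le_G le_H _).
by rewrite -(@dim_homvec2 k VG VH).
Qed.
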